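(* For a semiring $(S,+,\cdot)$ the following are equivalent: (i) $S$ is a b-lattice of nil-extensions of left skew-rings and $E^+(S)$ is a subsemigroup of $(S,+)$; (ii) $S$ is a quasi completely regular semiring and $e+f=e+f+e$ for all $e,f\in E^+(S)$.
   Context: A semiring $(S,+,\cdot)$ has two associative operations with $a(b+c)=ab+ac$, $(b+c)a=ba+ca$. $na$ is the $n$-fold sum of $a$. $E^+(S)$ is the set of additive idempotents. $a$ is completely regular if there is $x$ with $a=a+x+a$, $a+x=x+a$, $a(a+x)=a+x$; $S$ is quasi completely regular if for each $a\in S$ some $na$ is completely regular. A skew-ring is a semiring whose additive reduct is a (not necessarily commutative) group. A left zero semiring is a semiring with $(S,\cdot)$ a band and $(S,+)$ a left zero band ($a+b=a$ for all $a,b$). A left skew-ring is a semiring isomorphic to a direct product (componentwise operations) of a left zero semiring and a skew-ring. $S$ is a nil-extension of a subsemiring $K$ if $K$ is a bi-ideal ($a\in K,x\in S\Rightarrow a+x,x+a,ax,xa\in K$) and every $a\in S$ has some $na\in K$. A b-lattice is a semiring with $(S,\cdot)$ a band and $(S,+)$ a semilattice; $S$ is a b-lattice of semirings of a class if there is a congruence $\rho$ on $S$ with $S/\rho$ a b-lattice and each $\rho$-class a subsemiring in that class. *)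

Definition is_semiring {S : Type} (add mul : S -> S -> S) : Prop :=
  (forall a b c, add a (add b c) = add (add a b) c) /\
  (forall a b c, mul a (mul b c) = mul (mul a b) c) /\
  (forall a b c, mul a (add b c) = add (mul a b) (mul a c)) /\
  (forall a b c, mul (add b c) a = add (mul b a) (mul c a)).

(** [ntimes add n a] is the (n+1)-fold sum a + ... + a. *)
Fixpoint ntimes {S : Type} (add : S -> S -> S) (n : nat) (a : S) : S :=
  match n with
  | O => a
  | Datatypes.S m => add (ntimes add m a) a
  end.

(** [nsum add n a] = n a  (the n-fold sum), meaningful for n >= 1. *)
Definition nsum {S : Type} (add : S -> S -> S) (n : nat) (a : S) : S :=
  ntimes add (Nat.pred n) a.

Definition add_idem {S : Type} (add : S -> S -> S) (e : S) : Prop := add e e = e.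

Definition completely_regular {S : Type} (add mul : S -> S -> S) (a : S) : Prop :=
  exists x, a = add (add a x) a /\ add a x = add x a /\ mul a (add a x) = add a x.

Definition quasi_completely_regular {S : Type} (add mul : S -> S -> S) : Prop :=
  forall a, exists n, 1 <= n /\ completely_regular add mul (nsum add n a).

Definition is_skew_ring {S : Type} (add mul : S -> S -> S) : Prop :=
  is_semiring add mul /\
  exists z : S, (forall a, add z a = a /\ add a z = a) /\
                (forall a, exists b, add a b = z /\ add b a = z).

Definition is_left_zero_semiring {S : Type} (add mul : S -> S -> S) : Prop :=
  is_semiring add mul /\ (forall a, mul a a = a) /\ (forall a b, add a b = a).

Definition subsemiring {S : Type} (add mul : S -> S -> S) (K : S -> Prop) : Prop :=
  forall a b, K a -> K b -> K (add a b) /\ K (mul a b).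

(** The subsemiring K (of S) is a left skew-ring: it is isomorphic to the direct
    product (componentwise operations) of a left zero semiring L and a skew-ring G. *)
Definition is_left_skew_ring_on {S : Type} (add mul : S -> S -> S) (K : S -> Prop)
  : Prop :=
  exists (L G : Type) (addL mulL : L -> L -> L) (addG mulG : G -> G -> G)
         (f : L * G -> S),
    is_left_zero_semiring addL mulL /\
    is_skew_ring addG mulG /\
    (forall p, K (f p)) /\
    (forall p q, f p = f q -> p = q) /\
    (forall y, K y -> exists p, f p = y) /\
    (forall p q, f (addL (fst p) (fst q), addG (snd p) (snd q)) = add (f p) (f q)) /\
    (forall p q, f (mulL (fst p) (fst q), mulG (snd p) (snd q)) = mul (f p) (f q)).

Definition is_nil_ext_of_left_skew_ring_on {S : Type} (add mul : S -> S -> S)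
  (C : S -> Prop) : Prop :=
  exists K : S -> Prop,
    (forall a, K a -> C a) /\
    subsemiring add mul K /\
    (forall a x, K a -> C x ->
       K (add a x) /\ K (add x a) /\ K (mul a x) /\ K (mul x a)) /\
    (forall a, C a -> exists n, 1 <= n /\ K (nsum add n a)) /\
    is_left_skew_ring_on add mul K.

Definition congruence {S : Type} (add mul : S -> S -> S) (rho : S -> S -> Prop)
  : Prop :=
  (forall a, rho a a) /\ (forall a b, rho a b -> rho b a) /\
  (forall a b c, rho a b -> rho b c -> rho a c) /\
  (forall a b c d, rho a b -> rho c d -> rho (add a c) (add b d) /\ rho (mul a c) (mul b d)).

(** S/rho is a b-lattice: (S/rho,.) a band and (S/rho,+) a semilattice
    (associativity is inherited from S). *)
Definition quotient_is_b_lattice {S : Type} (add mul : S -> S -> S)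
  (rho : S -> S -> Prop) : Prop :=
  (forall a, rho (mul a a) a) /\ (forall a, rho (add a a) a) /\
  (forall a b, rho (add a b) (add b a)).

Definition b_lattice_of_nil_ext_left_skew_rings {S : Type} (add mul : S -> S -> S)
  : Prop :=
  exists rho : S -> S -> Prop,
    congruence add mul rho /\
    quotient_is_b_lattice add mul rho /\
    (forall x, subsemiring add mul (rho x) /\
               is_nil_ext_of_left_skew_ring_on add mul (rho x)).

From Stdlib Require Import ProofIrrelevance ClassicalEpsilon.

(* (ii) => (i): quasi complete regularity gives every a an additive idempotent
   o(a), the identity of the additive subgroup containing some multiple of a,
   which can be chosen with a o(a) = o(a).  Since (E^+(S),+) is a left regular
   band, o is a semiring morphism onto E^+(S), and "o(a), o(b) are L-related in
   (E^+(S),+)" is a b-lattice congruence.  In the class of an idempotent e, the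
   elements lying in the additive group of their own idempotent form a bi-ideal
   K, and (l, g) |-> l + g identifies the product of the left zero semiring
   {l in E^+(S) | l L e} with the skew-ring H_e onto K.
   (i) => (ii): elements of a left skew-ring are completely regular, and its
   additive idempotents form a left zero band; in the class of e + f this makes
   (e + f) + (e + f + e) = e + f, i.e. e + f + e = e + f. *)

Definition in_group {S : Type} (add : S -> S -> S) (g u : S) : Prop :=
  add g u = u /\ add u g = u /\ exists v, add u v = g /\ add v u = g.

(* Green's relation L of (S,+), in the form it takes on idempotents. *)
Definition Lrel {S : Type} (add : S -> S -> S) (e f : S) : Prop :=
  add e f = e /\ add f e = f.

Lemma proj1_sig_inj {A : Type} {P : A -> Prop} (u v : sig P) :
  proj1_sig u = proj1_sig v -> u = v.
Proof. apply eq_sig_hprop; intros; apply proof_irrelevance. Qed.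

Section Semiring.

Variables (S : Type) (add mul : S -> S -> S).
Local Infix "⊕" := add (at level 50, left associativity).
Local Infix "⊗" := mul (at level 40, left associativity).
Hypothesis addA : forall a b c, a ⊕ (b ⊕ c) = a ⊕ b ⊕ c.
Hypothesis mulA : forall a b c, a ⊗ (b ⊗ c) = a ⊗ b ⊗ c.
Hypothesis mulDl : forall a b c, a ⊗ (b ⊕ c) = a ⊗ b ⊕ a ⊗ c.
Hypothesis mulDr : forall a b c, (b ⊕ c) ⊗ a = b ⊗ a ⊕ c ⊗ a.

Lemma ntimes_idem e k : add_idem add e -> ntimes add k e = e.
Proof. intros He; induction k as [|k IH]; simpl; [reflexivity|]. now rewrite IH. Qed.

Lemma ntimes_add_comm k p : ntimes add k p ⊕ p = p ⊕ ntimes add k p.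
Proof.
  induction k as [|k IH]; simpl; [reflexivity|].
  rewrite IH at 1. now rewrite <- addA.
Qed.

Lemma in_group_idem g u : in_group add g u -> add_idem add g.
Proof.
  intros [Hgu [_ [v [Huv _]]]]. unfold add_idem.
  rewrite <- Huv at 2. now rewrite addA, Hgu.
Qed.

Lemma in_group_unit e : add_idem add e -> in_group add e e.
Proof. intros He. repeat split; try exists e; auto. Qed.

Lemma in_group_inv e u :
  in_group add e u -> exists v, in_group add e v /\ u ⊕ v = e /\ v ⊕ u = e.
Proof.
  intros Hu. assert (He := in_group_idem _ _ Hu).
  destruct Hu as [Heu [Hue [v [Huv Hvu]]]].
  exists (e ⊕ v ⊕ e). repeat split.
  - now rewrite !addA, He.
  - now rewrite <- !addA, He.
  - exists u. split.
    + now rewrite <- !addA, Heu, Hvu, He.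
    + now rewrite !addA, Hue, Huv, He.
  - now rewrite !addA, Hue, Huv, He.
  - now rewrite <- !addA, Heu, Hvu, He.
Qed.

Lemma in_group_add e u w : in_group add e u -> in_group add e w -> in_group add e (u ⊕ w).
Proof.
  intros [Heu [Hue [u' [Huu' Hu'u]]]] [Hew [Hwe [w' [Hww' Hw'w]]]].
  repeat split.
  - now rewrite addA, Heu.
  - now rewrite <- addA, Hwe.
  - exists (w' ⊕ u'). split.
    + now rewrite <- addA, (addA w), Hww', addA, Hue.
    + now rewrite <- addA, (addA u'), Hu'u, Hew.
Qed.

Lemma in_group_idem_eq g e : add_idem add e -> in_group add g e -> g = e.
Proof.
  intros He [_ [Heg [v [Hev _]]]].
  rewrite <- Hev, <- He at 1. now rewrite <- addA, Hev.
Qed.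

Lemma Lrel_refl e : add_idem add e -> Lrel add e e.
Proof. now split. Qed.

Lemma Lrel_sym e f : Lrel add e f -> Lrel add f e.
Proof. now intros [H1 H2]. Qed.

Lemma Lrel_trans e f g : Lrel add e f -> Lrel add f g -> Lrel add e g.
Proof.
  intros [Hef Hfe] [Hfg Hgf]. split.
  - rewrite <- Hef at 1. now rewrite <- addA, Hfg.
  - rewrite <- Hgf at 1. now rewrite <- addA, Hfe.
Qed.

Lemma Lrel_left_zero e a b : Lrel add e a -> Lrel add e b -> a ⊕ b = a.
Proof. intros Ha Hb. exact (proj1 (Lrel_trans _ _ _ (Lrel_sym _ _ Ha) Hb)). Qed.

Lemma add_comm_of_multiple_in_group e k p :
  in_group add e (ntimes add k p) -> e ⊕ p = p ⊕ e.
Proof.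
  intros Hq. remember (ntimes add k p) as q eqn:Hqdef.
  destruct (in_group_inv _ _ Hq) as [q' [_ [Hqq' Hq'q]]].
  destruct Hq as [Heq [Hqe _]].
  assert (Cqp : q ⊕ p = p ⊕ q) by (subst q; apply ntimes_add_comm).
  set (r := q ⊕ p).
  assert (Her : e ⊕ r = r) by (unfold r; now rewrite addA, Heq).
  assert (Hre : r ⊕ e = r) by (unfold r; now rewrite Cqp, <- addA, Hqe).
  (* q commutes with r, hence so does its inverse q' *)
  assert (Cq'r : q' ⊕ r = r ⊕ q').
  { rewrite <- Hre at 1. rewrite <- Hqq', !addA.
    replace (q' ⊕ r ⊕ q) with (q' ⊕ q ⊕ r) by (unfold r; now rewrite <- !addA, Cqp).
    now rewrite Hq'q, Her. }
  transitivity (q' ⊕ r); [unfold r; now rewrite addA, Hq'q|].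
  rewrite Cq'r. unfold r. now rewrite Cqp, <- addA, Hqq'.
Qed.

Lemma in_group_of_multiple e k p :
  in_group add e (ntimes add k p) -> e ⊕ p = p \/ p ⊕ e = p -> in_group add e p.
Proof.
  intros Hq Hor.
  assert (Cep := add_comm_of_multiple_in_group _ _ _ Hq).
  assert (Hep : e ⊕ p = p) by (destruct Hor; congruence).
  assert (Hpe : p ⊕ e = p) by congruence.
  remember (ntimes add k p) as q eqn:Hqdef.
  destruct (in_group_inv _ _ Hq) as [q' [_ [Hqq' Hq'q]]].
  assert (Cpq' : p ⊕ q' = q' ⊕ p).
  { assert (H : q' ⊕ (p ⊕ q) ⊕ q' = q' ⊕ (q ⊕ p) ⊕ q')
      by (subst q; now rewrite ntimes_add_comm).
    rewrite !addA, Hq'q, <- (addA (q' ⊕ p)), Hqq', Hep, <- addA, Hpe in H.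
    now symmetry. }
  destruct k as [|j]; simpl in Hqdef; [now subst q|].
  repeat split; auto. exists (q' ⊕ ntimes add j p). split.
  - now rewrite addA, Cpq', <- addA, <- ntimes_add_comm, <- Hqdef.
  - now rewrite <- addA, <- Hqdef.
Qed.

Lemma add_idem_mul_l e a : add_idem add e -> add_idem add (e ⊗ a).
Proof. intros He. unfold add_idem. now rewrite <- mulDr, He. Qed.

Lemma add_idem_mul_r e a : add_idem add e -> add_idem add (a ⊗ e).
Proof. intros He. unfold add_idem. now rewrite <- mulDl, He. Qed.

Lemma ntimes_mul_l e k a : e ⊗ ntimes add k a = ntimes add k (e ⊗ a).
Proof. induction k as [|k IH]; simpl; [reflexivity|]. now rewrite mulDl, IH. Qed.

Lemma ntimes_mul_r e k a : ntimes add k a ⊗ e = ntimes add k (a ⊗ e).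
Proof. induction k as [|k IH]; simpl; [reflexivity|]. now rewrite mulDr, IH. Qed.

Lemma mul_in_group_eq_l e g u : add_idem add e -> in_group add g u -> e ⊗ u = e ⊗ g.
Proof.
  intros He [_ [Hug [v [Huv _]]]].
  assert (Eg : e ⊗ g = e ⊗ u ⊕ e ⊗ v) by now rewrite <- Huv, mulDl.
  assert (Eu : e ⊗ u = e ⊗ u ⊕ e ⊗ g) by now rewrite <- mulDl, Hug.
  rewrite Eu at 1. now rewrite Eg, addA, add_idem_mul_l.
Qed.

Lemma mul_in_group_eq_r e g u : add_idem add e -> in_group add g u -> u ⊗ e = g ⊗ e.
Proof.
  intros He [_ [Hug [v [Huv _]]]].
  assert (Eg : g ⊗ e = u ⊗ e ⊕ v ⊗ e) by now rewrite <- Huv, mulDr.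
  assert (Eu : u ⊗ e = u ⊗ e ⊕ g ⊗ e) by now rewrite <- mulDr, Hug.
  rewrite Eu at 1. now rewrite Eg, addA, add_idem_mul_r.
Qed.

Lemma in_group_mulr g u s : in_group add g u -> in_group add (g ⊗ s) (u ⊗ s).
Proof.
  intros [Hgu [Hug [v [Huv Hvu]]]]. repeat split.
  - now rewrite <- mulDr, Hgu.
  - now rewrite <- mulDr, Hug.
  - exists (v ⊗ s). split; rewrite <- mulDr; congruence.
Qed.

Lemma in_group_mull g u s : in_group add g u -> in_group add (s ⊗ g) (s ⊗ u).
Proof.
  intros [Hgu [Hug [v [Huv Hvu]]]]. repeat split.
  - now rewrite <- mulDl, Hgu.
  - now rewrite <- mulDl, Hug.
  - exists (s ⊗ v). split; rewrite <- mulDl; congruence.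
Qed.

Lemma Lrel_mul e e' f f' : Lrel add e e' -> Lrel add f f' -> Lrel add (e ⊗ f) (e' ⊗ f').
Proof.
  intros [H1 H2] [H3 H4]. apply Lrel_trans with (e' ⊗ f).
  - split; rewrite <- mulDr; congruence.
  - split; rewrite <- mulDl; congruence.
Qed.

Lemma qcr_retraction :
  quasi_completely_regular add mul ->
  exists o : S -> S,
    (forall a, exists k, in_group add (o a) (ntimes add k a)) /\ (forall a, a ⊗ o a = o a).
Proof.
  intros Hq.
  assert (Ex : forall a, exists g, (exists k, in_group add g (ntimes add k a)) /\ a ⊗ g = g).
  { intros a. destruct (Hq a) as [n [_ [x [E1 [E2 E3]]]]].
    set (b := nsum add n a) in *.
    assert (Ib : in_group add (b ⊕ x) b).
    { repeat split; [now symmetry| |exists x; auto].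
      now rewrite E2, addA. }
    assert (Hg := in_group_idem _ _ Ib).
    exists (b ⊕ x). split; [now exists (Nat.pred n)|].
    unfold b, nsum in E3. rewrite ntimes_mul_r, ntimes_idem in E3; auto.
    now apply add_idem_mul_r. }
  exists (fun a => proj1_sig (constructive_indefinite_description _ (Ex a))).
  split; intros a; destruct (constructive_indefinite_description _ (Ex a)) as [g [Hg1 Hg2]];
    assumption.
Qed.

Lemma group_idem_unit {G : Type} (addG : G -> G -> G) (z h : G) :
  (forall a b c, addG a (addG b c) = addG (addG a b) c) ->
  (forall a, addG z a = a /\ addG a z = a) ->
  (forall a, exists b, addG a b = z /\ addG b a = z) ->
  addG h h = h -> h = z.
Proof.
  intros GA Hz Hinv Hh. destruct (Hinv h) as [k [_ Hkh]].
  transitivity (addG (addG k h) h); [now rewrite Hkh, (proj1 (Hz h))|].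
  now rewrite <- GA, Hh.
Qed.

Lemma left_skew_ring_completely_regular K y :
  is_left_skew_ring_on add mul K -> K y -> completely_regular add mul y.
Proof.
  intros [L [G [addL [mulL [addG [mulG [F
    [[_ [Lband Lzero]] [[[GA [_ [GDl _]]] [z [Hz Hinv]]] [_ [_ [Fsurj [Fadd Fmul]]]]]]]]]]]]] Hy.
  destruct (Fsurj y Hy) as [[l g] <-].
  destruct (Hinv g) as [h [Hgh Hhg]].
  assert (Hgz : mulG g z = z).
  { apply (group_idem_unit addG); auto. now rewrite <- GDl, (proj1 (Hz z)). }
  assert (Hyx : F (l, g) ⊕ F (l, h) = F (l, z)) by now rewrite <- Fadd; simpl; rewrite Lzero, Hgh.
  exists (F (l, h)). rewrite Hyx, <- Fadd, <- Fadd, <- Fmul; simpl.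
  now rewrite !Lzero, Lband, Hgz, Hhg, (proj1 (Hz g)).
Qed.

Lemma left_skew_ring_add_idem K p q :
  is_left_skew_ring_on add mul K -> K p -> K q ->
  add_idem add p -> add_idem add q -> p ⊕ q = p.
Proof.
  intros [L [G [addL [mulL [addG [mulG [F
    [[_ [_ Lzero]] [[[GA _] [z [Hz Hinv]]] [_ [Finj [Fsurj [Fadd _]]]]]]]]]]]]] Hp Hq.
  assert (Hunit : forall l g, add_idem add (F (l, g)) -> g = z).
  { intros l g H. unfold add_idem in H. rewrite <- Fadd in H; simpl in H.
    rewrite Lzero in H. apply Finj in H. injection H as H.
    exact (group_idem_unit addG z g GA Hz Hinv H). }
  destruct (Fsurj p Hp) as [[l1 g1] <-], (Fsurj q Hq) as [[l2 g2] <-].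
  intros Hp1 Hq2. rewrite (Hunit _ _ Hp1), (Hunit _ _ Hq2), <- Fadd; simpl.
  now rewrite Lzero, (proj1 (Hz z)).
Qed.

Lemma nil_ext_quasi_completely_regular C a :
  is_nil_ext_of_left_skew_ring_on add mul C -> C a ->
  exists n, 1 <= n /\ completely_regular add mul (nsum add n a).
Proof.
  intros [K [_ [_ [_ [Hmult HK]]]]] Ha.
  destruct (Hmult a Ha) as [n [Hn HKa]].
  exists n. split; [exact Hn|]. exact (left_skew_ring_completely_regular K _ HK HKa).
Qed.

Lemma nil_ext_add_idem C p q :
  is_nil_ext_of_left_skew_ring_on add mul C -> C p -> C q ->
  add_idem add p -> add_idem add q -> p ⊕ q = p.
Proof.
  intros [K [_ [_ [_ [Hmult HK]]]]] Hp Hq Hpi Hqi.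
  assert (Kidem : forall x, C x -> add_idem add x -> K x).
  { intros x Hx Hxi. destruct (Hmult x Hx) as [n [_ Hn]].
    unfold nsum in Hn. now rewrite ntimes_idem in Hn. }
  exact (left_skew_ring_add_idem K p q HK (Kidem p Hp Hpi) (Kidem q Hq Hqi) Hpi Hqi).
Qed.

Lemma b_lattice_quasi_completely_regular :
  b_lattice_of_nil_ext_left_skew_rings add mul -> quasi_completely_regular add mul.
Proof.
  intros [rho [[Hrefl _] [_ Hclasses]]] a.
  exact (nil_ext_quasi_completely_regular _ a (proj2 (Hclasses a)) (Hrefl a)).
Qed.

Lemma b_lattice_add_left_regular :
  b_lattice_of_nil_ext_left_skew_rings add mul ->
  (forall e f, add_idem add e -> add_idem add f -> add_idem add (e ⊕ f)) ->
  forall e f, add_idem add e -> add_idem add f -> e ⊕ f = e ⊕ f ⊕ e.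
Proof.
  intros [rho [[Hrefl [Hsym [_ Hcomp]]] [[_ [_ Hcomm]] Hclasses]]] Hclosed e f He Hf.
  set (g := e ⊕ f).
  assert (Hg : add_idem add g) by now apply Hclosed.
  assert (Hge : add_idem add (g ⊕ e)) by now apply Hclosed.
  assert (Hrho : rho g (g ⊕ e)).
  { apply Hsym. unfold g. rewrite <- addA.
    assert (H := proj1 (Hcomp e e _ _ (Hrefl e) (Hcomm f e))).
    now rewrite (addA e e f), He in H. }
  assert (H := nil_ext_add_idem _ _ _ (proj2 (Hclasses g)) (Hrefl g) Hrho Hg Hge).
  rewrite addA, Hg in H. now rewrite H.
Qed.

Hypothesis add_left_regular :
  forall e f, add_idem add e -> add_idem add f -> e ⊕ f = e ⊕ f ⊕ e.

Lemma add_idem_add e f : add_idem add e -> add_idem add f -> add_idem add (e ⊕ f).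
Proof.
  intros He Hf. unfold add_idem.
  rewrite addA, <- add_left_regular by auto. now rewrite <- addA, Hf.
Qed.

Lemma Lrel_add e e' f f' :
  add_idem add e -> add_idem add e' -> add_idem add f -> add_idem add f' ->
  Lrel add e e' -> Lrel add f f' -> Lrel add (e ⊕ f) (e' ⊕ f').
Proof.
  intros He He' Hf Hf' [H1 H2] [H3 H4].
  (* e + f + e' = e + (e' + f + e') = e + (e' + f) = e + f, by left regularity *)
  assert (Absorb : forall a a' b, add_idem add a' -> add_idem add b ->
            a ⊕ a' = a -> a ⊕ b ⊕ a' = a ⊕ b).
  { intros a a' b Ha' Hb H. rewrite <- H at 1.
    now rewrite <- !addA, (addA a' b a'), <- add_left_regular, addA, H. }
  split.
  - now rewrite addA, (Absorb e e' f), <- addA, H3.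
  - now rewrite addA, (Absorb e' e f'), <- addA, H4.
Qed.

Lemma Lrel_add_comm e f : add_idem add e -> add_idem add f -> Lrel add (e ⊕ f) (f ⊕ e).
Proof.
  intros He Hf. split.
  - now rewrite addA, <- (addA e f f), Hf, <- add_left_regular.
  - now rewrite addA, <- (addA f e e), He, <- add_left_regular.
Qed.

Section Retraction.

Variable o : S -> S.
Hypothesis o_group : forall a, exists k, in_group add (o a) (ntimes add k a).
Hypothesis mul_o : forall a, a ⊗ o a = o a.

Lemma o_idem a : add_idem add (o a).
Proof. destruct (o_group a) as [k Hk]. exact (in_group_idem _ _ Hk). Qed.

Lemma mul_o_l e a : add_idem add e -> e ⊗ a = e ⊗ o a.
Proof.
  intros He. destruct (o_group a) as [k Hk].
  rewrite <- (mul_in_group_eq_l _ _ _ He Hk), ntimes_mul_l, ntimes_idem; auto.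
  now apply add_idem_mul_l.
Qed.

Lemma mul_o_r e a : add_idem add e -> a ⊗ e = o a ⊗ e.
Proof.
  intros He. destruct (o_group a) as [k Hk].
  rewrite <- (mul_in_group_eq_r _ _ _ He Hk), ntimes_mul_r, ntimes_idem; auto.
  now apply add_idem_mul_r.
Qed.

Lemma o_id e : add_idem add e -> o e = e.
Proof.
  intros He. destruct (o_group e) as [k Hk]. rewrite ntimes_idem in Hk by auto.
  now apply in_group_idem_eq.
Qed.

Lemma add_idem_mul_idem e : add_idem add e -> e ⊗ e = e.
Proof. intros He. rewrite <- (o_id e He) at 2. now rewrite mul_o, o_id. Qed.

Lemma o_in_group g u : in_group add g u -> o u = g.
Proof.
  intros Hu. assert (Hg := in_group_idem _ _ Hu).
  rewrite <- mul_o, (mul_in_group_eq_r _ _ _ (o_idem u) Hu), <- mul_o_l by exact Hg.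
  rewrite (mul_in_group_eq_l _ _ _ Hg Hu). now apply add_idem_mul_idem.
Qed.

Lemma in_group_o p : o p ⊕ p = p \/ p ⊕ o p = p -> in_group add (o p) p.
Proof. intros H. destruct (o_group p) as [k Hk]. eapply in_group_of_multiple; eauto. Qed.

Lemma o_mul a b : o (a ⊗ b) = o a ⊗ o b.
Proof.
  set (h := o a ⊗ o b).
  assert (Hh : add_idem add h) by apply add_idem_mul_l, o_idem.
  assert (E1 : o (a ⊗ b) = h ⊗ o (a ⊗ b)).
  { rewrite <- (mul_o (a ⊗ b)) at 1.
    rewrite <- mulA, (mul_o_r _ b), (mul_o_r _ a) by (auto using add_idem_mul_l, o_idem).
    unfold h. now rewrite mulA. }
  assert (E2 : h ⊗ (a ⊗ b) = h).
  { rewrite mulA, (mul_o_l _ a), (mul_o_l _ b) by (auto using add_idem_mul_l, o_idem).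
    rewrite <- mulA. now apply add_idem_mul_idem. }
  now rewrite E1, <- mul_o_l.
Qed.

Lemma o_add a b : o (a ⊕ b) = o a ⊕ o b.
Proof.
  set (h := o a ⊕ o b).
  assert (Hh : add_idem add h) by (apply add_idem_add; apply o_idem).
  assert (E1 : o (a ⊕ b) = h ⊗ o (a ⊕ b)).
  { rewrite <- (mul_o (a ⊕ b)) at 1. unfold h.
    now rewrite !mulDr, <- (mul_o_r _ a), <- (mul_o_r _ b) by apply o_idem. }
  assert (E2 : h ⊗ (a ⊕ b) = h).
  { rewrite mulDl, (mul_o_l _ a), (mul_o_l _ b), <- mulDl by exact Hh.
    now apply add_idem_mul_idem. }
  now rewrite E1, <- mul_o_l.
Qed.

Lemma o_ntimes k a : o (ntimes add k a) = o a.
Proof.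
  induction k as [|k IH]; simpl; [reflexivity|].
  now rewrite o_add, IH, o_idem.
Qed.

Section Class.

Variable e : S.
Hypothesis He : add_idem add e.

Definition rho_class (b : S) : Prop := Lrel add e (o b).

Definition kernel (b : S) : Prop := rho_class b /\ in_group add (o b) b.

Lemma Lrel_e_mul a b : Lrel add e a -> Lrel add e b -> Lrel add e (a ⊗ b).
Proof. intros Ha Hb. rewrite <- (add_idem_mul_idem e He). now apply Lrel_mul. Qed.

Lemma rho_class_add a b : rho_class a -> rho_class b -> rho_class (a ⊕ b).
Proof.
  intros Ha Hb. unfold rho_class. rewrite o_add, <- He.
  apply Lrel_add; auto using o_idem.
Qed.

Lemma rho_class_mul a b : rho_class a -> rho_class b -> rho_class (a ⊗ b).
Proof. intros Ha Hb. unfold rho_class. rewrite o_mul. now apply Lrel_e_mul. Qed.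

Lemma rho_class_subsemiring : subsemiring add mul rho_class.
Proof. intros a b Ha Hb. split; [apply rho_class_add | apply rho_class_mul]; auto. Qed.

Lemma kernel_add_r a x : kernel a -> rho_class x -> kernel (a ⊕ x).
Proof.
  intros [Ha [Hoa _]] Hx. split; [now apply rho_class_add|].
  apply in_group_o. left.
  now rewrite o_add, (Lrel_left_zero _ _ _ Ha Hx), addA, Hoa.
Qed.

Lemma kernel_add_l a x : kernel a -> rho_class x -> kernel (x ⊕ a).
Proof.
  intros [Ha [_ [Hao _]]] Hx. split; [now apply rho_class_add|].
  apply in_group_o. right.
  rewrite o_add, (Lrel_left_zero _ _ _ Hx Ha), <- Hao at 1.
  now rewrite <- !addA, (Lrel_left_zero _ _ _ Ha Hx), Hao.
Qed.

Lemma kernel_mul_r a x : kernel a -> rho_class x -> kernel (a ⊗ x).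
Proof.
  intros [Ha Ia] Hx. split; [now apply rho_class_mul|].
  rewrite o_mul, <- mul_o_l by apply o_idem. now apply in_group_mulr.
Qed.

Lemma kernel_mul_l a x : kernel a -> rho_class x -> kernel (x ⊗ a).
Proof.
  intros [Ha Ia] Hx. split; [now apply rho_class_mul|].
  rewrite o_mul, <- mul_o_r by apply o_idem. now apply in_group_mull.
Qed.

Lemma kernel_subsemiring : subsemiring add mul kernel.
Proof.
  intros a b Ha Hb. split; [apply kernel_add_r | apply kernel_mul_r]; auto; apply Hb.
Qed.

Lemma rho_class_multiple_in_kernel a :
  rho_class a -> exists n, 1 <= n /\ kernel (nsum add n a).
Proof.
  intros Ha. destruct (o_group a) as [k Hk].
  exists (Datatypes.S k). split; [apply le_n_S, le_0_n|].
  unfold kernel, rho_class, nsum; simpl. now rewrite o_ntimes.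
Qed.

Definition band_part : Type := {l : S | add_idem add l /\ Lrel add e l}.

Definition group_part : Type := {g : S | in_group add e g}.

Lemma band_part_mul_closed l1 l2 :
  add_idem add l1 /\ Lrel add e l1 -> add_idem add l2 /\ Lrel add e l2 ->
  add_idem add (l1 ⊗ l2) /\ Lrel add e (l1 ⊗ l2).
Proof. intros [H1 L1] [_ L2]. split; [now apply add_idem_mul_l | now apply Lrel_e_mul]. Qed.

Lemma group_part_mul_closed g1 g2 :
  in_group add e g1 -> in_group add e g2 -> in_group add e (g1 ⊗ g2).
Proof.
  intros I1 I2. assert (H := in_group_mulr _ _ g2 I1).
  now rewrite (mul_in_group_eq_l _ _ _ He I2), add_idem_mul_idem in H.
Qed.

Definition band_mul (l1 l2 : band_part) : band_part :=
  exist _ (proj1_sig l1 ⊗ proj1_sig l2) (band_part_mul_closed _ _ (proj2_sig l1) (proj2_sig l2)).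

Definition group_add (g1 g2 : group_part) : group_part :=
  exist _ (proj1_sig g1 ⊕ proj1_sig g2) (in_group_add _ _ _ (proj2_sig g1) (proj2_sig g2)).

Definition group_mul (g1 g2 : group_part) : group_part :=
  exist _ (proj1_sig g1 ⊗ proj1_sig g2) (group_part_mul_closed _ _ (proj2_sig g1) (proj2_sig g2)).

Definition embed (p : band_part * group_part) : S := proj1_sig (fst p) ⊕ proj1_sig (snd p).

Lemma band_part_left_zero_semiring :
  is_left_zero_semiring (fun l1 _ : band_part => l1) band_mul.
Proof.
  repeat split; try reflexivity.
  - intros a b c. apply proj1_sig_inj, mulA.
  - intros [l Hl]. apply proj1_sig_inj, add_idem_mul_idem, (proj1 Hl).
Qed.

Lemma group_part_skew_ring : is_skew_ring group_add group_mul.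
Proof.
  split; [repeat split; intros a b c; apply proj1_sig_inj; simpl; auto|].
  exists (exist _ e (in_group_unit e He)). split.
  - intros [g Ig]. split; apply proj1_sig_inj; apply Ig.
  - intros [g Ig]. destruct (in_group_inv _ _ Ig) as [v [Iv [Hgv Hvg]]].
    exists (exist _ v Iv). split; now apply proj1_sig_inj.
Qed.

Lemma o_embed p : o (embed p) = proj1_sig (fst p).
Proof.
  destruct p as [[l [Hl Hel]] [g Ig]]; unfold embed; simpl.
  now rewrite o_add, (o_in_group _ _ Ig), (o_id l Hl), (proj2 Hel).
Qed.

Lemma add_e_embed p : e ⊕ embed p = proj1_sig (snd p).
Proof.
  destruct p as [[l Hl] [g Ig]]; unfold embed; simpl.
  destruct Hl as [_ [Hel _]], Ig as [Heg _].
  now rewrite addA, Hel, Heg.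
Qed.

Lemma embed_in_kernel p : kernel (embed p).
Proof.
  split.
  - unfold rho_class. rewrite o_embed. apply (proj2_sig (fst p)).
  - apply in_group_o. left. rewrite o_embed.
    destruct p as [[l Hl] g]; unfold embed; simpl. now rewrite addA, (proj1 Hl).
Qed.

Lemma embed_inj p q : embed p = embed q -> p = q.
Proof.
  intros E.
  assert (El := f_equal o E). rewrite !o_embed in El.
  assert (Eg := f_equal (add e) E). rewrite !add_e_embed in Eg.
  destruct p, q; simpl in *. f_equal; now apply proj1_sig_inj.
Qed.

Lemma embed_surj y : kernel y -> exists p, embed p = y.
Proof.
  intros [[Heo Hoe] Iy].
  assert (Ieg : in_group add e (e ⊕ y)).
  { assert (H : in_group add (o (e ⊕ y)) (e ⊕ y)).
    { apply in_group_o. left. now rewrite o_add, o_id, Heo, addA, He. }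
    now rewrite o_add, o_id, Heo in H. }
  exists (exist _ (o y) (conj (o_idem y) (conj Heo Hoe)), exist _ (e ⊕ y) Ieg).
  unfold embed; simpl.
  now rewrite addA, Hoe, (proj1 Iy).
Qed.

Lemma embed_add p q :
  embed (fst p, group_add (snd p) (snd q)) = embed p ⊕ embed q.
Proof.
  destruct p as [[l1 Hl1] [g1 Ig1]], q as [[l2 Hl2] [g2 Ig2]]; unfold embed; simpl.
  destruct Ig1 as [_ [Hg1e _]], Hl2 as [_ [Hel2 _]].
  assert (Hg1l2 : g1 ⊕ l2 = g1) by (rewrite <- Hg1e at 1; now rewrite <- addA, Hel2).
  now rewrite (addA (l1 ⊕ g1)), <- (addA l1 g1 l2), Hg1l2, addA.
Qed.

Lemma embed_mul p q :
  embed (band_mul (fst p) (fst q), group_mul (snd p) (snd q)) = embed p ⊗ embed q.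
Proof.
  destruct p as [[l1 Hl1] [g1 Ig1]], q as [[l2 Hl2] [g2 Ig2]]; unfold embed; simpl.
  destruct Hl1 as [Hl1 Hel1], Hl2 as [Hl2 Hel2].
  rewrite mulDl, !mulDr, (mul_in_group_eq_r _ _ _ Hl2 Ig1), (mul_in_group_eq_l _ _ _ Hl1 Ig2).
  (* l1 l2, e l2 and l1 e are all L-related to e, so they absorb each other *)
  assert (Hee : Lrel add e e) by now apply Lrel_refl.
  rewrite !addA, (Lrel_left_zero e (l1 ⊗ l2) (e ⊗ l2)) by now apply Lrel_e_mul.
  now rewrite (Lrel_left_zero e (l1 ⊗ l2) (l1 ⊗ e)) by now apply Lrel_e_mul.
Qed.

Lemma kernel_left_skew_ring : is_left_skew_ring_on add mul kernel.
Proof.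
  exists band_part, group_part, (fun l1 _ => l1), band_mul, group_add, group_mul, embed.
  exact (conj band_part_left_zero_semiring (conj group_part_skew_ring
    (conj embed_in_kernel (conj embed_inj (conj embed_surj (conj embed_add embed_mul)))))).
Qed.

Lemma rho_class_nil_ext : is_nil_ext_of_left_skew_ring_on add mul rho_class.
Proof.
  exists kernel. split; [|split; [|split; [|split]]].
  - intros a Ha. apply Ha.
  - apply kernel_subsemiring.
  - intros a x Ha Hx. split; [|split; [|split]];
      auto using kernel_add_r, kernel_add_l, kernel_mul_r, kernel_mul_l.
  - apply rho_class_multiple_in_kernel.
  - apply kernel_left_skew_ring.
Qed.

End Class.

Lemma b_lattice_of_retraction : b_lattice_of_nil_ext_left_skew_rings add mul.
Proof.
  exists (fun a b => Lrel add (o a) (o b)).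
  split; [split; [|split; [|split]] | split; [split; [|split] |]].
  - intros a. apply Lrel_refl, o_idem.
  - intros a b. apply Lrel_sym.
  - intros a b c. apply Lrel_trans.
  - intros a b c d Hab Hcd. rewrite !o_add, !o_mul.
    split; [apply Lrel_add; auto using o_idem | now apply Lrel_mul].
  - intros a. rewrite o_mul, add_idem_mul_idem by apply o_idem. apply Lrel_refl, o_idem.
  - intros a. rewrite o_add, o_idem. apply Lrel_refl, o_idem.
  - intros a b. rewrite !o_add. apply Lrel_add_comm; apply o_idem.
  - intros x. split; [apply rho_class_subsemiring | apply rho_class_nil_ext]; apply o_idem.
Qed.

End Retraction.

End Semiring.

Theorem theorem3p11 (S : Type) (add mul : S -> S -> S) :
  is_semiring add mul ->
  ((b_lattice_of_nil_ext_left_skew_rings add mul /\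
    (forall e f, add_idem add e -> add_idem add f -> add_idem add (add e f)))
   <->
   (quasi_completely_regular add mul /\
    (forall e f, add_idem add e -> add_idem add f ->
       add e f = add (add e f) e))).
Proof.
  intros [addA [mulA [mulDl mulDr]]]. split.
  - intros [Hbl Hclosed]. split.
    + exact (b_lattice_quasi_completely_regular S add mul Hbl).
    + exact (b_lattice_add_left_regular S add mul addA Hbl Hclosed).
  - intros [Hqcr Hlr].
    destruct (qcr_retraction S add mul addA mulDl mulDr Hqcr) as [o [Ho Hmul]].
    split.
    + exact (b_lattice_of_retraction S add mul addA mulA mulDl mulDr Hlr o Ho Hmul).
    + exact (add_idem_add S add addA Hlr).
Qed.
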